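(* Let $d\ge1$, let $y\in\mathbb{R}^d$ satisfy $\|y\|_\infty\le 1/2$, and let $q\ge d+2\pi$. Then $$\sum_{x\in\mathbb{Z}^d\setminus\{0\}}\frac{1}{\|x+y\|^q}\le\Big[(1+\sqrt d)\sqrt{d+3}\Big]^q,$$ where $\|\cdot\|$ is the Euclidean norm. *)

From HB Require Import structures.
From mathcomp Require Import all_boot all_order all_algebra.
From mathcomp Require Import all_classical all_reals all_analysis.
Set Implicit Arguments. Unset Strict Implicit. Unset Printing Implicit Defensive.
Import Order.TTheory GRing.Theory Num.Theory.
Local Open Scope ring_scope.

Definition eucl_norm (R : realType) (d : nat) (v : 'rV[R]_d) : R :=
  Num.sqrt (\sum_(i < d) v ord0 i ^+ 2).

Definition lat_emb (R : realType) (d : nat) (x : 'rV[int]_d) : 'rV[R]_d :=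
  map_mx (fun z : int => z%:~R) x.

From HB Require Import structures.
From mathcomp Require Import all_boot all_order all_algebra.
From mathcomp Require Import all_classical all_reals all_analysis.
From mathcomp Require Import zify.
From mathcomp.algebra_tactics Require Import ring lra.

Set Implicit Arguments.
Unset Strict Implicit.
Unset Printing Implicit Defensive.
Import Order.TTheory GRing.Theory Num.Theory.
Local Open Scope ring_scope.

(* Sort the nonzero lattice points by the dyadic scale of their sup norm N(x):
   when N(x) <= 2^j < 2 N(x), the shifted point x + y has Euclidean norm at
   least N(x) - 1/2 >= 2^j / 2.  Put B := (1 + sqrt d) sqrt (d + 3) >= d + 3 and
   use q >= d + 4 (as 2 pi >= 4) through 1 / r^q = B^q / (B r)^q <= B^q / (B r)^(d+4).
   Charging x to every scale j with N(x) <= 2^j, scale j is charged by the at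
   most (2^(j+1) + 1)^d points of the box N(x) <= 2^j, each with weight
   B^q / (B 2^j / 2)^(d+4); this is at most B^q / 2^(j+1), and the geometric
   series sums to at most B^q. *)

Lemma exists_pow2_bracket (N : nat) : (0 < N)%N ->
  exists j, (N <= 2 ^ j)%N /\ (2 ^ j < 2 * N)%N.
Proof.
move=> N_gt0; case: (ltnP 1 N) => N_gt1; last first.
  by exists 0%N; have -> : N = 1%N by lia.
have /andP[N_le lt_N] := up_log_bounds (isT : (1 < 2)%N) N_gt1.
exists (up_log 2 N); split => //.
have up_gt0 : (0 < up_log 2 N)%N by rewrite up_log_gt0 N_gt1.
by rewrite -(prednK up_gt0) expnS ltn_pmul2l.
Qed.

Lemma exp6_le_exp_addn3 (d : nat) : (1 <= d)%N ->
  (32 * 6 ^ d <= (d + 3) ^ (d + 4))%N.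
Proof.
move=> d_gt0; case: (ltnP d 3) => d3; first by case: d d_gt0 d3 => [|[|[|]]].
rewrite expnD mulnC leq_mul //; first by rewrite leq_exp2r //; lia.
by apply: (@leq_trans (6 ^ 4)) => //; rewrite leq_exp2r //; lia.
Qed.

Lemma sum_inv_pow2S (R : realFieldType) (J : nat) :
  \sum_(j < J) ((2 ^ j.+1)%:R : R)^-1 = 1 - ((2 ^ J)%:R)^-1.
Proof.
elim: J => [|J IH]; first by rewrite big_ord0 expn0 invr1 subrr.
rewrite big_ord_recr /= IH !natrX exprS.
have pow2_neq0 : (2 : R) ^+ J != 0 by rewrite expf_neq0.
by field; rewrite pow2_neq0 /=; lra.
Qed.

Lemma addn3_le_lattice_const (R : rcfType) (d : nat) : (1 <= d)%N ->
  (d + 3)%:R <= (1 + Num.sqrt (d%:R : R)) * Num.sqrt (d%:R + 3).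
Proof.
move=> d_gt0.
have sqrt_ge1 : 1 <= Num.sqrt (d%:R : R).
  by rewrite -[X in X <= _]sqrtr1 ler_sqrt // ler1n.
have sqrt_le : Num.sqrt (d%:R + 3 : R) <= 1 + Num.sqrt d%:R.
  rewrite -[X in _ <= X]ger0_norm ?addr_ge0 // -sqrtr_sqr ler_sqrt ?sqr_ge0 //.
  by rewrite sqrrD sqr_sqrtr ?ler0n //; lra.
apply: le_trans (ler_wpM2r (sqrtr_ge0 _) sqrt_le).
by rewrite -expr2 sqr_sqrtr ?natrD // addr_ge0.
Qed.

Section ShellWeight.
Variables (R : realFieldType) (d : nat) (B : R).
Hypotheses (d_gt0 : (1 <= d)%N) (B_ge : (d + 3)%:R <= B).

Definition shell_weight (j : nat) : R := ((B * (2 ^ j)%:R / 2) ^+ (d + 4))^-1.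

Let B_gt0 : 0 < B.
Proof. by apply: lt_le_trans B_ge; rewrite ltr0n addn3. Qed.

Let B_ge0 : 0 <= B. Proof. exact: ltW. Qed.

Lemma shell_weight_ge0 (j : nat) : 0 <= shell_weight j.
Proof. by rewrite invr_ge0 exprn_ge0 // divr_ge0 // mulr_ge0. Qed.

Lemma exp3_le_half_exp : 2 * 3 ^+ d <= (B / 2) ^+ (d + 4).
Proof.
have : ((32 * 6 ^ d)%N%:R : R) <= ((d + 3) ^ (d + 4))%N%:R.
  by rewrite ler_nat exp6_le_exp_addn3.
rewrite natrM !natrX => nat_le.
have exp_le : ((d + 3)%:R : R) ^+ (d + 4) <= B ^+ (d + 4).
  by apply: lerXn2r; rewrite ?nnegrE ?ler0n.
have exp6 : (6 : R) ^+ d = 2 ^+ d * 3 ^+ d by rewrite -exprMn; congr (_ ^+ _); lra.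
have exp4 : (2 : R) ^+ 4 = 16 by rewrite !exprS expr0; lra.
rewrite expr_div_n ler_pdivlMr ?exprn_gt0 //.
apply: le_trans exp_le; apply: le_trans nat_le; rewrite exp6 exprD exp4.
have : 0 <= (2 : R) ^+ d * 3 ^+ d by rewrite mulr_ge0 ?exprn_ge0.
by nra.
Qed.

Lemma shell_weight_box_le (j : nat) :
  shell_weight j * ((2 * 2 ^ j + 1) ^ d)%:R <= ((2 ^ j.+1)%:R)^-1.
Proof.
set u : R := (2 ^ j)%:R.
have u_ge1 : 1 <= u by rewrite /u ler1n expn_gt0.
have pos : 0 < (B * u / 2) ^+ (d + 4).
  by rewrite exprn_gt0 // divr_gt0 // mulr_gt0 //; lra.
rewrite expnS natrM -/u mulrC ler_pdivrMr // mulrC ler_pdivlMr; last first.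
  by rewrite mulr_gt0 //; lra.
have box_le : ((2 * 2 ^ j + 1) ^ d)%:R <= (3 * u) ^+ d.
  by rewrite natrX natrD natrM -/u; apply: lerXn2r; rewrite ?nnegrE; lra.
have u_exp_le : u ^+ (d + 1) <= u ^+ (d + 4) by apply: ler_weXn2l => //; lia.
have half_ge0 : 0 <= (B / 2) ^+ (d + 4) by rewrite exprn_ge0 // divr_ge0.
rewrite [X in _ <= X](_ : _ = (B / 2) ^+ (d + 4) * u ^+ (d + 4)); last first.
  by rewrite -exprMn mulrAC.
apply: (le_trans (y := (3 * u) ^+ d * (2 * u))).
  by apply: ler_wpM2r => //; lra.
rewrite [X in X <= _](_ : _ = (2 * 3 ^+ d) * u ^+ (d + 1)); last first.
  by rewrite addn1 exprS exprMn; ring.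
apply: le_trans (ler_wpM2l half_ge0 u_exp_le).
by rewrite ler_wpM2r ?exp3_le_half_exp // exprn_ge0 //; lra.
Qed.

Lemma sum_shell_weight_box_le1 (J : nat) :
  \sum_(j < J) shell_weight j * ((2 * 2 ^ j + 1) ^ d)%:R <= 1.
Proof.
apply: (le_trans (y := \sum_(j < J) ((2 ^ j.+1)%:R : R)^-1)).
  by apply: ler_sum => j _; apply: shell_weight_box_le.
by rewrite sum_inv_pow2S lerBlDr lerDl invr_ge0 ler0n.
Qed.

End ShellWeight.

Definition supnormz (d : nat) (x : 'rV[int]_d) : nat :=
  \max_(i < d) absz (x ord0 i).

Lemma supnormz_gt0 (d : nat) (x : 'rV[int]_d) : x != 0 -> (0 < supnormz x)%N.
Proof.
move=> x_neq0; have [i xi_neq0] : exists i, x ord0 i != 0.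
  apply/existsP; move: x_neq0; apply: contraR; rewrite negb_exists => /forallP x0.
  by apply/eqP/matrixP => a b; rewrite (ord1 a) mxE; apply/eqP/negbNE/x0.
by apply: leq_trans (leq_bigmax i); rewrite absz_gt0.
Qed.

(* Shifting by K maps the box of sup norm at most K injectively into 'I_(2K+1)^d. *)
Lemma count_supnormz_le (d : nat) (s : seq 'rV[int]_d) (K : nat) : uniq s ->
  (count (fun x => supnormz x <= K)%N s <= (K.*2.+1) ^ d)%N.
Proof.
move=> s_uniq.
pose shift (x : 'rV[int]_d) : 'rV['I_(K.*2.+1)]_d :=
  \row_i inord (absz (x ord0 i + K%:Z)).
have shift_lt (x : 'rV[int]_d) : (supnormz x <= K)%N -> forall i,
    (absz (x ord0 i + K%:Z)%R < K.*2.+1)%N.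
  by move=> /bigmax_leqP x_le i; have := x_le i isT; lia.
rewrite -size_filter -(size_map shift).
have -> : (K.*2.+1 ^ d)%N = #|{: 'rV['I_(K.*2.+1)]_d}|.
  by rewrite card_mx card_ord mul1n.
rewrite cardE; apply: uniq_leq_size; last by move=> z _; rewrite mem_enum.
rewrite map_inj_in_uniq ?filter_uniq // => a b; rewrite !mem_filter.
move=> /andP[a_le _] /andP[b_le _] /matrixP shift_eq; apply/matrixP => i k.
rewrite (ord1 i); have := shift_eq ord0 k; rewrite !mxE => /(congr1 val) /=.
rewrite !inordK ?shift_lt //.
have := bigmax_leqP _ _ _ a_le k isT; have := bigmax_leqP _ _ _ b_le k isT.
by move: (a ord0 k) (b ord0 k) => m n /=; lia.
Qed.

Section ShiftedLattice.
Variables (R : realType) (d : nat) (y : 'rV[R]_d).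
Hypothesis y_small : forall i : 'I_d, `|y ord0 i| <= 1 / 2.

Lemma abs_coord_le_eucl_norm (v : 'rV[R]_d) (i : 'I_d) :
  `|v ord0 i| <= eucl_norm v.
Proof.
rewrite /eucl_norm -sqrtr_sqr; apply: ler_wsqrtr.
by rewrite (bigD1 i) //= lerDl sumr_ge0 // => k _; apply: sqr_ge0.
Qed.

Lemma supnormz_le_eucl_norm_shift (x : 'rV[int]_d) :
  (supnormz x)%:R - 1 / 2 <= eucl_norm (lat_emb R x + y).
Proof.
set r := eucl_norm _.
have r_ge0 : 0 <= r by apply: sqrtr_ge0.
rewrite /supnormz; elim/big_ind: _ => [|m n m_le n_le|i _].
- by rewrite sub0r; lra.
- by case: leqP.
apply: le_trans (abs_coord_le_eucl_norm _ i); rewrite !mxE.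
apply: le_trans (lerB_normD _ _).
by rewrite natr_absz intr_norm lerD2l lerN2 y_small.
Qed.

Lemma inv_powR_eucl_norm_le_shell (x : 'rV[int]_d) (q B : R) (j : nat) :
  d%:R + 4 <= q -> 2 <= B -> (2 ^ j < 2 * supnormz x)%N ->
  (eucl_norm (lat_emb R x + y) `^ q)^-1 <= B `^ q * shell_weight d B j.
Proof.
move=> q_ge B_ge2 j_lt.
set r := eucl_norm _.
have r_ge := supnormz_le_eucl_norm_shift x; rewrite -/r in r_ge.
set u : R := (2 ^ j)%:R.
have u_ge1 : 1 <= u by rewrite /u ler1n expn_gt0.
have u_le : u + 1 <= 2 * (supnormz x)%:R.
  have : (2 ^ j + 1 <= 2 * supnormz x)%N by lia.
  by rewrite -(ler_nat R) natrD natrM.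
have r_ge_half : u / 2 <= r by lra.
have Br_ge1 : 1 <= B * r by nra.
have -> : (r `^ q)^-1 = B `^ q * ((B * r) `^ q)^-1.
  rewrite powRM; try lra.
  by rewrite invfM mulrA mulfV ?mul1r // gt_eqF // powR_gt0 //; lra.
rewrite ler_wpM2l ?powR_ge0 // lef_pV2 ?posrE ?powR_gt0 ?exprn_gt0 //; try nra.
apply: (le_trans (y := (B * r) ^+ (d + 4))).
  by apply: lerXn2r; rewrite ?nnegrE; nra.
by rewrite -powR_mulrn; [apply: ler_powR; [nra | rewrite natrD] | nra].
Qed.

Lemma sum_inv_powR_eucl_norm_le (q B : R) (s : seq 'rV[int]_d) :
  (1 <= d)%N -> d%:R + 4 <= q -> (d + 3)%:R <= B ->
  uniq s -> (forall x, x \in s -> x != 0) ->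
  \sum_(x <- s) (eucl_norm (lat_emb R x + y) `^ q)^-1 <= B `^ q.
Proof.
move=> d_gt0 q_ge B_ge s_uniq s_neq0.
have B_ge2 : 2 <= B by apply: le_trans B_ge; rewrite ler_nat; lia.
set J := (\max_(x <- s) supnormz x).+1.
have charge x : x \in s -> (eucl_norm (lat_emb R x + y) `^ q)^-1 <=
    B `^ q * \sum_(j < J | (supnormz x <= 2 ^ j)%N) shell_weight d B j.
  move=> xs; have [j [N_le j_lt]] := exists_pow2_bracket (supnormz_gt0 (s_neq0 x xs)).
  have j_lt_J : (j < J)%N.
    have : (2 ^ j < 2 ^ (supnormz x).+1)%N.
      by apply: (leq_trans j_lt); rewrite expnS leq_mul2l ltnW // ltn_expl.
    rewrite ltn_exp2l // => /leq_trans; apply.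
    by rewrite ltnS; apply: leq_bigmax_seq.
  apply: le_trans (inv_powR_eucl_norm_le_shell q_ge B_ge2 j_lt) _.
  rewrite ler_wpM2l ?powR_ge0 // (bigD1 (Ordinal j_lt_J)) //= lerDl.
  by rewrite sumr_ge0 // => k _; apply: shell_weight_ge0.
rewrite big_seq; apply: le_trans (ler_sum _ charge) _.
rewrite -big_seq -mulr_sumr -[X in _ <= X]mulr1 ler_wpM2l ?powR_ge0 //.
under eq_bigr do rewrite big_mkcond.
rewrite exchange_big /=; apply: le_trans (sum_shell_weight_box_le1 d_gt0 B_ge J).
apply: ler_sum => j _; rewrite -big_mkcond /= big_const_seq iter_addr_0 mulr_natr.
apply: ler_wpMn2l; first exact: shell_weight_ge0.
by rewrite mul2n addn1 count_supnormz_le.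
Qed.

End ShiftedLattice.

Local Open Scope classical_set_scope.

Theorem mainTheorem6 (R : realType) (d : nat) (y : 'rV[R]_d) (q : R) :
  (1 <= d)%N ->
  (forall i : 'I_d, `|y ord0 i| <= 1 / 2) ->
  d%:R + 2 * pi <= q ->
  (\esum_(x in [set x : 'rV[int]_d | (x != 0)%R])
      ((eucl_norm (lat_emb R x + y) `^ q)^-1)%:E
   <= (((1 + Num.sqrt d%:R) * Num.sqrt (d%:R + 3)) `^ q)%:E)%E.
Proof.
move=> d_gt0 y_small q_ge.
have q_ge4 : d%:R + 4 <= q by have := pi_ge2 R; lra.
apply: ge_ereal_sup => _ [A [A_fin A_sub] <-].
rewrite fsbig_finite // sumEFin lee_fin.
apply: sum_inv_powR_eucl_norm_le => //.
- exact: addn3_le_lattice_const.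
- exact: finmap.fset_uniq.
- by move=> x; rewrite in_fset_set // inE => /A_sub.
Qed.
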